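(* In the setting described in the context, suppose conditions (E) and (M) hold. Then for any compact set $A\subset\Omega$ with $|A|>0$ and any $\delta>0$, as $N\to\infty$, \[ \mathbb P_N\big[\max_AX\le(\gamma_*-\delta)\log\epsilon_N^{-1}\big]\to0. \]
   Context: $\Omega\subset\mathbb R^d$ is a bounded, simply connected open set with smooth boundary; $|\cdot|$ is Lebesgue measure; $\gamma_*=\sqrt{2d}$. For each $N$, $\mathbb P_N$ (expectation $\mathbb E_N$) is a probability measure under which the canonical process $X$ is a random function on $\Omega$ that is integrable, bounded above and upper semicontinuous (so it attains its maximum on compact sets), and which approximates a Gaussian log-correlated field on $\Omega$ in the sense that for each $f\in C_c^\infty(\Omega)$ the law of $\int fX$ converges to that of the Gaussian field with covariance $\log|x-y|^{-1}+g(x,y)$, $g$ continuous, bounded above, $L^2$. For $\gamma>0$ let $\mu_N^\gamma(dx)=\frac{e^{\gamma X(x)}}{\mathbb E_N[e^{\gamma X(x)}]}dx$. Condition (E): there is a sequence $\epsilon_N>0$, $\epsilon_N\to0$, such that for every $\gamma>0$ there is $R_\gamma>0$ with $\mathbb E_N[e^{\gamma X(x)}]\le R_\gamma\epsilon_N^{-\gamma^2/2}$ for all $x\in\Omega$, $N$, and for every compact $A\subset\Omega$ there is $C_{\gamma,A}>0$ with $\mathbb E_N[e^{\gamma X(x)}]\ge C_{\gamma,A}^{-1}\epsilon_N^{-\gamma^2/2}$ for all $x\in A$. Condition (M): for any $\gamma<\gamma_*$ and any fixed Borel set $A\subseteq\Omega$ with $|A|>0$, $\mu_N^\gamma(A)$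 under $\mathbb P_N$ converges in distribution as $N\to\infty$ to a random variable $\zeta_A^\gamma$ with $\mathbb P[0<\zeta_A^\gamma<\infty]=1$. *)

From HB Require Import structures.
From mathcomp Require Import all_boot all_order all_algebra.
From mathcomp Require Import all_classical all_reals all_analysis measurable_realfun.
Set Implicit Arguments. Unset Strict Implicit. Unset Printing Implicit Defensive.
Import Order.TTheory GRing.Theory Num.Theory numFieldNormedType.Exports.
Local Open Scope classical_set_scope.
Local Open Scope ring_scope.

Section Defs.
Variable R : realType.

(** ** Euclidean space R^d, modelled as row vectors 'rV[R]_d
    (topology = the usual product topology on R^d). *)

Definition enorm (d : nat) (x : 'rV[R]_d) : R :=
  Num.sqrt (\sum_(i < d) x ord0 i ^+ 2).

(** coordinates: d-tuples (which carry the Borel product sigma-algebra)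
    to row vectors *)
Definition rv_of_tuple (d : nat) (t : d.-tuple R) : 'rV[R]_d :=
  \row_(i < d) tnth t i.

(** d-dimensional Lebesgue measure on the (Borel) sets of R^d = d.-tuple R,
    built as the iterated product  leb^{n+1} = (leb x leb^n) pushed forward
    along (x, t) |-> x :: t,  and leb^0 = Dirac mass at the empty tuple. *)
Fixpoint lebd (n : nat) : set (n.-tuple R) -> \bar R :=
  match n with
  | 0 => fun A => if `[< A [tuple] >] then 1%E else 0%E
  | n'.+1 => pushforward ((@lebesgue_measure R) \x @lebd n')%E
               (fun p : R * n'.-tuple R => [tuple of p.1 :: p.2])
  end.
Arguments lebd : clear implicits.

Definition vol (d : nat) (A : set 'rV[R]_d) : \bar R :=
  lebd d (@rv_of_tuple d @^-1` A).

Definition borel (d : nat) (A : set 'rV[R]_d) : Prop :=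
  measurable (@rv_of_tuple d @^-1` A).

Definition integ (d : nat) (A : set 'rV[R]_d) (f : 'rV[R]_d -> R) : \bar R :=
  (\int[lebd d]_(t in @rv_of_tuple d @^-1` A) (f (rv_of_tuple t))%:E)%E.

Definition integrable_on (d : nat) (A : set 'rV[R]_d) (f : 'rV[R]_d -> R) :=
  (lebd d).-integrable (@rv_of_tuple d @^-1` A) (fun t => (f (rv_of_tuple t))%:E).

Fixpoint dder (d : nat) (vs : seq 'rV[R]_d) (f : 'rV[R]_d -> R) : 'rV[R]_d -> R :=
  match vs with
  | [::] => f
  | v :: vs' => fun x => 'D_v (dder vs' f) x
  end.

Definition smooth (d : nat) (f : 'rV[R]_d -> R) : Prop :=
  forall vs : seq 'rV[R]_d,
    continuous (dder vs f) /\ (forall v x, derivable (dder vs f) x v).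

Definition test_fun (d : nat) (Om : set 'rV[R]_d) (f : 'rV[R]_d -> R) : Prop :=
  smooth f /\
  exists K : set 'rV[R]_d, compact K /\ K `<=` Om /\ (forall x, ~ K x -> f x = 0).

Definition bounded_dom (d : nat) (Om : set 'rV[R]_d) : Prop :=
  exists M : R, forall x, Om x -> enorm x <= M.

Definition I01 : set R := [set t | 0 <= t <= 1].

Definition simply_connected (d : nat) (Om : set 'rV[R]_d) : Prop :=
  (exists x, Om x) /\
  (forall x y, Om x -> Om y ->
     exists c : R -> 'rV[R]_d, {within I01, continuous c} /\
       c @` I01 `<=` Om /\ c 0 = x /\ c 1 = y) /\
  (forall c : R -> 'rV[R]_d, {within I01, continuous c} -> c @` I01 `<=` Om ->
     c 0 = c 1 ->
     exists H : R * R -> 'rV[R]_d, {within I01 `*` I01, continuous H} /\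
       H @` (I01 `*` I01) `<=` Om /\
       (forall s, I01 s -> H (s, 0) = c s /\ H (s, 1) = c 0) /\
       (forall t, I01 t -> H (0, t) = c 0 /\ H (1, t) = c 0)).

Definition smooth_boundary (d : nat) (Om : set 'rV[R]_d) : Prop :=
  forall p, closure Om p -> ~ Om p ->
    exists (U : set 'rV[R]_d) (phi : 'rV[R]_d -> R),
      open U /\ U p /\ smooth phi /\
      (forall x, U x -> closure Om x -> ~ Om x -> exists v, 'D_v phi x != 0) /\
      Om `&` U = [set x | U x /\ phi x < 0].

Definition usc_on (d : nat) (Om : set 'rV[R]_d) (f : 'rV[R]_d -> R) : Prop :=
  forall x, Om x -> forall e : R, 0 < e ->
    \forall y \near x, Om y -> f y < f x + e.

Definition gamma_star (d : nat) : R := Num.sqrt (2 * d%:R).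

Section Field.
Context (dT : measure_display) (T : measurableType dT).
Variables (P : nat -> probability T R) (d : nat) (X : T -> 'rV[R]_d -> R).

Definition mgf (N : nat) (gamma : R) (x : 'rV[R]_d) : \bar R :=
  (\int[P N]_w (expR (gamma * X w x))%:E)%E.

Definition mu_N (N : nat) (gamma : R) (A : set 'rV[R]_d) (w : T) : \bar R :=
  integ A (fun x => expR (gamma * X w x) / fine (mgf N gamma x)).

Definition cvg_dist_ereal (Y : nat -> T -> \bar R)
    (nu : probability (\bar R) R) : Prop :=
  forall h : \bar R -> R, continuous h -> (exists M, forall z, `|h z| <= M) ->
    (fun N => \int[P N]_w (h (Y N w))%:E)%E @ \oo -->
      (\int[nu]_z (h z)%:E)%E.

(** Y_N converges in distribution to the centred Gaussian N(0, s^2)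
    (s = standard deviation; s = 0 means the Dirac mass at 0) *)
Definition cvg_dist_gauss (Y : nat -> T -> R) (s : R) : Prop :=
  forall h : R -> R, continuous h -> (exists M, forall z, `|h z| <= M) ->
    (fun N => \int[P N]_w (h (Y N w))%:E)%E @ \oo -->
      (if s == 0 then (h 0)%:E
       else (\int[normal_prob 0 s]_z (h z)%:E)%E).

(** Var of \int f Y for the Gaussian field with covariance
    log|x-y|^{-1} + g(x,y) on Om *)
Definition field_var (Om : set 'rV[R]_d) (g : 'rV[R]_d -> 'rV[R]_d -> R)
    (f : 'rV[R]_d -> R) : R :=
  fine (integ Om (fun x => f x *
    fine (integ Om (fun y => (ln (enorm (x - y))^-1 + g x y) * f y)))).

Definition setting (Om : set 'rV[R]_d) : Prop :=
  (0 < d)%N /\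
  open Om /\ bounded_dom Om /\ simply_connected Om /\ smooth_boundary Om /\
  (forall x, measurable_fun setT (fun w => X w x)) /\
  measurable_fun setT (fun p : T * d.-tuple R => X p.1 (rv_of_tuple p.2)) /\
  (forall N, {ae P N, forall w, integrable_on Om (X w) /\
                (exists M, forall x, Om x -> X w x <= M) /\ usc_on Om (X w)}) /\
  (* approximation of the Gaussian log-correlated field *)
  (exists g : 'rV[R]_d -> 'rV[R]_d -> R,
     {within Om `*` Om, continuous (fun p => g p.1 p.2)} /\
     (exists M, forall x y, Om x -> Om y -> g x y <= M) /\
     (\int[lebd d]_(t in @rv_of_tuple d @^-1` Om)
        \int[lebd d]_(s in @rv_of_tuple d @^-1` Om)
          ((g (rv_of_tuple t) (rv_of_tuple s)) ^+ 2)%:E < +oo)%E /\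
     (forall f, test_fun Om f ->
        cvg_dist_gauss (fun N w => fine (integ Om (fun x => f x * X w x)))
                       (Num.sqrt (field_var Om g f)))).

Definition condE (Om : set 'rV[R]_d) (eps : nat -> R) : Prop :=
  (forall N, 0 < eps N) /\ eps @ \oo --> 0 /\
  forall gamma : R, 0 < gamma ->
    (exists Rg : R, 0 < Rg /\ forall N x, Om x ->
        (mgf N gamma x <= (Rg * eps N `^ (- (gamma ^+ 2 / 2)))%:E)%E) /\
    (forall A : set 'rV[R]_d, compact A -> A `<=` Om ->
       exists C : R, 0 < C /\ forall N x, A x ->
         ((C^-1 * eps N `^ (- (gamma ^+ 2 / 2)))%:E <= mgf N gamma x)%E).

Definition condM (Om : set 'rV[R]_d) : Prop :=
  forall gamma : R, 0 < gamma < gamma_star d ->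
  forall A : set 'rV[R]_d, borel A -> A `<=` Om -> (0 < vol A)%E ->
    exists nu : probability (\bar R) R,
      nu [set z | (0 < z < +oo)%E] = 1%E /\
      cvg_dist_ereal (fun N => mu_N N gamma A) nu.

End Field.
End Defs.

(* Pick g1 < g2 < gamma_* close to gamma_*. By condition (E), on the event
   {max_A X <= (gamma_* - delta) log eps_N^-1} the normalised weights satisfy
   e^{g2 X} / E[e^{g2 X}] <= C eps_N^c e^{g1 X} / E[e^{g1 X}] on A for some
   c > 0, hence mu_N^g2(A) <= C eps_N^c mu_N^g1(A). By condition (M), with high
   probability mu_N^g1(A) is bounded and mu_N^g2(A) is bounded away from 0,
   which contradicts that inequality once eps_N^c is small. As mu_N^gamma(A) is
   not known to be measurable, "with high probability" is expressed through
   outer probabilities, obtained by testing the convergence in distribution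
   against continuous ramps of the contracted extended real line. *)

From HB Require Import structures.
From mathcomp Require Import all_boot all_order all_algebra.
From mathcomp Require Import all_classical all_reals all_analysis measurable_realfun.
From mathcomp Require Import ring lra.
Import Order.TTheory GRing.Theory Num.Theory numFieldNormedType.Exports.
Local Open Scope classical_set_scope.
Local Open Scope ring_scope.
Import HBNNSimple.

(* [lebd n] is a plain set function, not a measure instance, so the facts about
   [integ] needed below are proved for any nonnegative set function vanishing
   on [set0]. *)
Section set_function_integral.
Context d (T : measurableType d) (R : realType) (mu : set T -> \bar R).
Hypotheses (mu0 : mu set0 = 0%E) (mu_ge0 : forall A, (0 <= mu A)%E).
Local Open Scope ereal_scope.

Let sintegral_term_ge0 (f : {nnsfun T >-> R}) x :
  0 <= x%:E * mu (f @^-1` [set x]).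
Proof.
have [x0|x0] := ltP x 0%R; last by rewrite mule_ge0.
rewrite (_ : f @^-1` _ = set0) ?mu0 ?mule0//.
apply/seteqP; split => // t /= ft; have : (0 <= f t)%R by exact: fun_ge0.
by rewrite ft leNgt x0.
Qed.

Lemma sintegral_eq0 (f : T -> R) : f =1 cst 0%R -> sintegral mu f = 0.
Proof.
move=> f0; rewrite sintegralET fsbig1// => x _.
have [->|x0] := eqVneq x 0%R; first by rewrite mul0e.
rewrite (_ : f @^-1` _ = set0) ?mu0 ?mule0//.
by apply/seteqP; split => // t /=; rewrite f0 => /esym/eqP; rewrite (negbTE x0).
Qed.

Lemma sintegral_scale (r : R) (f : {nnsfun T >-> R}) : (0 < r)%R ->
  sintegral mu (cst r \* f)%R = r%:E * sintegral mu f.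
Proof.
move=> /lt0r_neq0 r0; rewrite !sintegralET ge0_mule_fsumr//.
rewrite (reindex_fsbigT ( *%R r))/=; last first.
  by exists ( *%R r^-1); [exact: mulKf|exact: mulVKf].
by apply: eq_fsbigr => x; rewrite preimage_cstM// [(_ / r)%R]mulrC mulKf// muleA.
Qed.

Lemma ge0_integral_sup D (f : T -> R) : (forall x, D x -> 0 <= f x)%R ->
  \int[mu]_(x in D) (f x)%:E = ereal_sup [set sintegral mu s |
    s in [set s : {nnsfun T >-> R} | forall x, (s x)%:E <= ((EFin \o f) \_ D) x]].
Proof.
move=> f0; have fD0 x : setT x -> 0 <= ((EFin \o f) \_ D) x.
  by move=> _; rewrite /patch; case: ifP => [/[!inE] /f0|]; rewrite ?lee_fin.
rewrite /integral; have -> : ((EFin \o f) \_ D)^\+ = (EFin \o f) \_ D.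
  by apply/funext => x; rewrite (ge0_funeposE fD0 (in_setT x)).
have -> : ((EFin \o f) \_ D)^\- = cst 0.
  by apply/funext => x; rewrite (ge0_funenegE fD0 (in_setT x)).
suff -> : ereal_sup [set sintegral mu s | s in [set s : {nnsfun T >-> R} |
    forall x, (s x)%:E <= cst 0 x]] = 0 by rewrite sube0.
apply/eqP; rewrite eq_le; apply/andP; split; last first.
  by apply/ereal_sup_ubound; exists nnsfun0 => //; exact: sintegral_eq0.
apply/ge_ereal_sup => _ [s /= s0 <-]; rewrite sintegral_eq0// => x.
by apply/eqP; rewrite eq_le fun_ge0 andbT -lee_fin s0.
Qed.

Lemma ge0_le_integral_scale D (f g : T -> R) (K : R) : (0 < K)%R ->
  (forall x, D x -> 0 <= f x)%R -> (forall x, D x -> 0 <= g x)%R ->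
  (forall x, D x -> f x <= K * g x)%R ->
  \int[mu]_(x in D) (f x)%:E <= K%:E * \int[mu]_(x in D) (g x)%:E.
Proof.
move=> K0 f0 g0 fg; rewrite !ge0_integral_sup//.
apply/ge_ereal_sup => _ [s /= sf <-].
have K'0 : (0 <= K^-1)%R by rewrite invr_ge0 ltW.
pose s' := scale_nnsfun s K'0.
have -> : sintegral mu s = K%:E * sintegral mu s'.
  by rewrite sintegral_scale ?invr_gt0// muleA -EFinM divff ?gt_eqF// mul1e.
apply: lee_wpmul2l; first by rewrite lee_fin ltW.
apply/ereal_sup_ubound; exists s' => //= x; move: (sf x).
rewrite /patch; case: ifP => [/[!inE] Dx|_] /=; rewrite !lee_fin => sx.
  by rewrite ler_pdivrMl// (le_trans sx)// fg.
by rewrite mulr_ge0_le0.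
Qed.
End set_function_integral.

Section lebd.
Context (R : realType).

Lemma lebd_ge0 n (A : set (n.-tuple R)) : (0 <= @lebd R n A)%E.
Proof.
elim: n A => [A /=|n IH A /=]; first by case: asboolP.
by apply: integral_ge0 => x _; exact: IH.
Qed.

Lemma lebd0 n : @lebd R n set0 = 0%E.
Proof.
elim: n => [/=|n IH /=]; first by case: asboolP.
rewrite /pushforward preimage_set0.
by apply: integral0_eq => x _ /=; rewrite xsection0.
Qed.

Lemma integ_le_scale d (A : set 'rV[R]_d) (f g : 'rV[R]_d -> R) (K : R) :
  0 < K -> (forall x, A x -> 0 <= f x) -> (forall x, A x -> 0 <= g x) ->
  (forall x, A x -> f x <= K * g x) ->
  (integ A f <= K%:E * integ A g)%E.
Proof.
move=> K0 f0 g0 fg; apply: ge0_le_integral_scale => //.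
- exact: lebd0.
- exact: lebd_ge0.
- by move=> t /f0.
- by move=> t /g0.
- by move=> t /fg.
Qed.

End lebd.

Section borel_row_vectors.
Context {R : realType} {d : nat}.
Local Notation rv := (@rv_of_tuple R d).

Definition rat_box (p : d.-tuple rat * rat) : set (d.-tuple R) :=
  \bigcap_(i in [set: 'I_d]) [set t | `|tnth t i - ratr (tnth p.1 i)| < ratr p.2].

Lemma measurable_rat_box p : measurable (rat_box p).
Proof.
apply: fin_bigcap_measurable => [|i _]; first exact: finite_finset.
have /(_ measurableT _ (measurable_itv `]-oo, ratr p.2[)) : measurable_fun setT
    (fun t : d.-tuple R => `|tnth t i - ratr (tnth p.1 i)|).
  by apply: measurableT_comp => //; apply: measurable_funB => //; exact: measurable_tnth.
rewrite setTI; congr measurable; apply/seteqP; split => t /=; by rewrite in_itv.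
Qed.

Lemma rat_box_around (t : d.-tuple R) {e : R} : 0 < e ->
  exists2 p, rat_box p t &
    forall s, rat_box p s -> forall i, `|tnth s i - tnth t i| < e.
Proof.
move=> e0.
have [r /[!in_itv]/= /andP[r1 r2]] : exists r : rat, ratr r \in `](e / 3), (2 * e / 3)[.
  by apply: rat_in_itvoo; lra.
have q_ i : exists q : rat, ratr q \in `](tnth t i - e / 3), (tnth t i + e / 3)[.
  by apply: rat_in_itvoo; lra.
exists ([tuple projT1 (cid (q_ i)) | i < d], r) => [i _ /=|s sp i].
  rewrite tnth_mktuple; move: (projT2 (cid (q_ i))); rewrite in_itv /=.
  by move=> /andP[] *; rewrite distrC ltr_norml; apply/andP; split; lra.
move: (sp i I); rewrite /= tnth_mktuple; move: (projT2 (cid (q_ i))).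
rewrite in_itv /= ltr_norml ltr_norml => /andP[] ? ? /andP[] ? ?.
by apply/andP; split; lra.
Qed.

Lemma open_preimage_measurable (O : set 'rV[R]_d) : open O ->
  measurable (rv @^-1` O).
Proof.
move=> oO; pose B p := if `[< rat_box p `<=` rv @^-1` O >] then rat_box p else set0.
suff -> : rv @^-1` O = \bigcup_p B p.
  apply: countable_bigcupT_measurable => [|p]; first exact: countableP.
  by rewrite /B; case: asboolP => _ //; exact: measurable_rat_box.
apply/seteqP; split => [t Ot|t [p _]]; last first.
  by rewrite /B; case: asboolP => // sub /sub.
have : nbhs (rv t) O by rewrite openE in oO; exact: oO.
move=> /nbhs_ballP[e /= e0 eO].
have [p tp pe] := rat_box_around t e0.
exists p => //; rewrite /B; case: asboolP => // -[] s sp; apply: eO.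
by split => // i j; rewrite !mxE -ball_normE /= distrC; exact: pe.
Qed.

Lemma compact_borel {A : set 'rV[R]_d} : compact A -> borel A.
Proof.
move=> cA; have clA : closed A by apply: compact_closed => //; exact: hausdorff.
rewrite /borel -[A]setCK -preimage_setC; apply: measurableC.
by apply: open_preimage_measurable; rewrite openC.
Qed.

End borel_row_vectors.

Section ramp.
Context {R : realType}.
Implicit Types a b r : R.

Definition ramp a b r := Num.min 1 (Num.max 0 ((r - a) / (b - a))).

Lemma ramp_ge0 a b r : 0 <= ramp a b r.
Proof. by rewrite /ramp le_min ler01 le_max lexx. Qed.

Lemma ramp_le1 a b r : ramp a b r <= 1.
Proof. by rewrite /ramp ge_min lexx. Qed.

Lemma ramp_eq1 a b r : a < b -> b <= r -> ramp a b r = 1.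
Proof.
move=> ab br; apply/min_idPl; rewrite le_max ler_pdivlMr ?subr_gt0// mul1r.
by apply/orP; right; lra.
Qed.

Lemma ramp_eq0 a b r : a < b -> r <= a -> ramp a b r = 0.
Proof.
move=> ab ra; rewrite /ramp; have -> : Num.max 0 ((r - a) / (b - a)) = 0.
  by apply/max_idPl; rewrite pmulr_lle0 ?invr_gt0 ?subr_gt0// subr_le0.
exact/min_idPr/ler01.
Qed.

Lemma continuous_ramp a b : continuous (ramp a b).
Proof.
move=> r; change {for r, continuous ((cst 1 : R -> R^o) \min
  ((cst 0 : R -> R^o) \max (fun r => (r - a) / (b - a) : R^o)))}.
apply: continuous_min; first exact: cvg_cst.
apply: continuous_max; first exact: cvg_cst.
by apply: cvgM; [apply: cvgD; [exact: cvg_id|exact: cvg_cst]|exact: cvg_cst].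
Qed.

End ramp.

Section outer_probability.
Context {R : realType} {d} {T : measurableType d}.
Local Open Scope ereal_scope.

Definition outer_le (P : probability T R) (E : set T) (e : R) :=
  exists B, measurable B /\ E `<=` B /\ P B <= e%:E.

Lemma outer_le_sub {P : probability T R} {E E' : set T} {e} :
  E `<=` E' -> outer_le P E' e -> outer_le P E e.
Proof.
by move=> EE' [B [mB [E'B PB]]]; exists B; split => //; split => // w /EE' /E'B.
Qed.

Lemma outer_leU {P : probability T R} {E1 E2 : set T} {e1 e2} :
  outer_le P E1 e1 -> outer_le P E2 e2 -> outer_le P (E1 `|` E2) (e1 + e2).
Proof.
move=> [B1 [mB1 [EB1 PB1]]] [B2 [mB2 [EB2 PB2]]]; exists (B1 `|` B2).
split; first exact: measurableU.
split; first by move=> w [/EB1|/EB2]; [left|right].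
by rewrite EFinD (le_trans (measureU2 _ _ _))// leeD.
Qed.

Lemma outer_le_zeros {P : probability T R} {f : T -> R} {e : R} :
  (forall w, 0 <= f w <= 1)%R -> (1 - e)%:E < \int[P]_w (f w)%:E ->
  outer_le P [set w | f w <= 0]%R e.
Proof.
move=> f01; rewrite ge0_integralTE => [|w]; last by rewrite lee_fin; case/andP: (f01 w).
move=> /ereal_sup_gt [_ [h /= hf <-]] lt_h.
have mC : measurable (h @^-1` `]0%R, +oo[) := measurable_funPTI h (measurable_itv _).
exists (~` (h @^-1` `]0%R, +oo[)); split; first exact: measurableC.
split.
  move=> w /= fw0; rewrite in_itv /= andbT; apply/negP.
  by rewrite -leNgt -lee_fin (le_trans (hf w)).
have h_le1 : sintegral P h <= P (h @^-1` `]0%R, +oo[).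
  rewrite -(sintegral_indic P (h @^-1` `]0%R, +oo[)).
  have -> : \1_(h @^-1` `]0%R, +oo[) = indic_nnsfun R mC :> (T -> R) by [].
  apply: le_sintegral => w /=; change (h w <= \1_(h @^-1` `]0%R, +oo[) w)%R.
  rewrite indicE; case: (boolP (w \in _)) => [_|]; last first.
    by rewrite notin_setE /= in_itv /= andbT => /negP; rewrite -leNgt.
  by apply: (@le_trans _ _ (f w)); [rewrite -lee_fin hf|case/andP: (f01 w)].
rewrite probability_setC//; have := lt_le_trans lt_h h_le1.
have := probability_le1 P mC.
by case: (P _) => [r||] //=; rewrite ?lte_fin ?lee_fin => *; lra.
Qed.

End outer_probability.

Lemma continuous_contract (R : realType) : continuous (@contract R).
Proof.
move=> z; apply/cvgrPdist_lt => e e0.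
by move: (@nbhsx_ballx _ _ z e e0); apply: filterS => y; rewrite /ball /= /ereal_ball.
Qed.

Section laws_on_extended_reals.
Context {R : realType}.
Local Open Scope ereal_scope.

Let measurable_ge (a : \bar R) : measurable [set z | a <= z].
Proof.
have := emeasurable_itv `[a, +oo[.
by congr measurable; apply/seteqP; split => z /=; rewrite in_itv /= andbT.
Qed.

Let measurable_le (a : \bar R) : measurable [set z | z <= a].
Proof.
have := emeasurable_itv `]-oo, a].
by congr measurable; apply/seteqP; split => z /=; rewrite in_itv.
Qed.

Let measurable_pos : measurable [set z : \bar R | 0 < z < +oo].
Proof.
have := @emeasurable_itv R `]0%E, +oo%E[.
by congr measurable; apply/seteqP; split => z /=; rewrite in_itv.
Qed.

Lemma measure_le_integral d (T : measurableType d) (nu : {measure set T -> \bar R})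
    (F : set T) (h : T -> R) : measurable F -> (forall z, 0 <= h z)%R ->
  (forall z, F z -> 1 <= h z)%R -> nu F <= \int[nu]_z (h z)%:E.
Proof.
move=> mF h0 hF; rewrite ge0_integralTE => [|z]; last by rewrite lee_fin.
rewrite -(sintegral_indic nu F); apply: ereal_sup_ubound.
exists (indic_nnsfun R mF) => //= z.
change ((\1_F z)%:E <= (h z)%:E); rewrite lee_fin indicE.
by case: (boolP (z \in F)) => [/[!inE] /hF|].
Qed.

Lemma probability_nondecreasing_gt {d} {T : measurableType d}
    {nu : probability T R} {F : (set T)^nat} {S : set T} {e : R} :
  (forall k, measurable (F k)) -> nondecreasing_seq F ->
  measurable S -> nu S = 1 -> S `<=` \bigcup_k F k -> (0 < e)%R ->
  exists k, (1 - e)%:E < nu (F k).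
Proof.
move=> mF ndF mS nuS SF e0.
have mU : measurable (\bigcup_k F k) by exact: bigcupT_measurable.
have lt1 : (1 - e)%:E < nu (\bigcup_k F k).
  have : nu S <= nu (\bigcup_k F k) by apply: le_measure; rewrite ?inE.
  by rewrite nuS; apply: lt_le_trans; rewrite lte_fin; lra.
have [k _ hk] := @nondecreasing_cvg_mu _ _ R nu F mF mU ndF _ (open_ereal_gt' lt1).
by exists k; apply: (hk k) => /=.
Qed.

Lemma pos_law_ge {nu : probability (\bar R) R} {e : R} :
  nu [set z | 0 < z < +oo] = 1 -> (0 < e)%R ->
  exists2 eta : R, (0 < eta)%R & (1 - e)%:E < nu [set z | eta%:E <= z].
Proof.
move=> nu1 e0; pose F k := [set z : \bar R | (k.+1%:R^-1)%:E <= z].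
have ndF : nondecreasing_seq F.
  move=> m n mn; apply/subsetPset => z /=; apply: le_trans.
  by rewrite lee_fin lef_pV2 ?posrE// ler_nat.
have cover : [set z | 0 < z < +oo] `<=` \bigcup_k F k.
  move=> [r /andP[r0 _]| |] //=; last by rewrite ltxx andbF.
  exists (Num.truncn r^-1) => //=.
  by rewrite /F /= lee_fin -[leRHS]invrK lef_pV2 ?posrE ?invr_gt0// ltW// truncnS_gt.
have [k hk] := probability_nondecreasing_gt (fun=> measurable_ge _) ndF
  measurable_pos nu1 cover e0.
by exists (k.+1%:R^-1)%R => //; rewrite invr_gt0.
Qed.

Lemma pos_law_le {nu : probability (\bar R) R} {e : R} :
  nu [set z | 0 < z < +oo] = 1 -> (0 < e)%R ->
  exists2 M : R, (0 < M)%R & (1 - e)%:E < nu [set z | z <= M%:E].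
Proof.
move=> nu1 e0; pose F k := [set z : \bar R | z <= k.+1%:R%:E].
have ndF : nondecreasing_seq F.
  by move=> m n mn; apply/subsetPset => z /= /le_trans; apply; rewrite lee_fin ler_nat.
have cover : [set z | 0 < z < +oo] `<=` \bigcup_k F k.
  move=> [r /andP[r0 _]| |] //=; last by rewrite ltxx andbF.
  exists (Num.truncn r) => //=.
  by rewrite /F /= lee_fin ltW// truncnS_gt.
have [k hk] := probability_nondecreasing_gt (fun=> measurable_le _) ndF
  measurable_pos nu1 cover e0.
by exists k.+1%:R.
Qed.

Section convergence_in_distribution.
Context {dT} {T : measurableType dT} {P : nat -> probability T R}
  {Y : nat -> T -> \bar R} {nu : probability (\bar R) R}.
Hypotheses (cvY : cvg_dist_ereal P Y nu) (nu_pos : nu [set z | 0 < z < +oo] = 1).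

Lemma cvg_dist_outer_le {h : \bar R -> R} {e : R} : continuous h ->
  (forall z, 0 <= h z <= 1)%R -> (1 - e)%:E < \int[nu]_z (h z)%:E ->
  \forall N \near \oo, outer_le (P N) [set w | h (Y N w) <= 0]%R e.
Proof.
move=> hc h01 lt_e.
have hb : exists M, forall z, (`|h z| <= M)%R.
  by exists 1%R => z; have /andP[h0 h1] := h01 z; rewrite ger0_norm.
near=> N; apply: outer_le_zeros => [w|]; first exact: h01.
by near: N; exact: (cvY _ hc hb _ (open_ereal_gt' lt_e)).
Unshelve. all: by end_near. Qed.

Lemma cvg_dist_outer_le_small {e : R} : (0 < e)%R ->
  exists2 eta : R, (0 < eta)%R &
  \forall N \near \oo, outer_le (P N) [set w | Y N w <= eta%:E] e.
Proof.
move=> e0; have [eta eta0 nu_eta] := pos_law_ge nu_pos e0.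
pose a := contract (eta / 2)%:E; pose b := contract eta%:E.
have ab : (a < b)%R by rewrite lt_contract lte_fin; lra.
exists (eta / 2)%R; first by rewrite divr_gt0.
have h01 z : (0 <= ramp a b (contract z) <= 1)%R by rewrite ramp_ge0 ramp_le1.
have hc : continuous (ramp a b \o @contract R).
  move=> z; apply: continuous_comp; first exact: continuous_contract.
  exact: continuous_ramp.
have hnu : (1 - e)%:E < \int[nu]_z ((ramp a b \o @contract R) z)%:E.
  apply: (lt_le_trans nu_eta); apply: measure_le_integral => // z.
    by case/andP: (h01 z).
  by move=> /= eta_z; rewrite ramp_eq1// le_contract.
apply: filterS (cvg_dist_outer_le hc h01 hnu) => N.
apply: outer_le_sub => w /= Yw.
by rewrite ramp_eq0// le_contract.
Qed.

Lemma cvg_dist_outer_le_large {e : R} : (0 < e)%R ->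
  exists2 M : R, (0 < M)%R &
  \forall N \near \oo, outer_le (P N) [set w | M%:E <= Y N w] e.
Proof.
move=> e0; have [M M0 nu_M] := pos_law_le nu_pos e0.
pose a := contract M%:E; pose b := contract (M + 1)%:E.
have ab : (a < b)%R by rewrite lt_contract lte_fin; lra.
exists (M + 1)%R; first lra.
pose h z := (1 - ramp a b (contract z))%R.
have h01 z : (0 <= h z <= 1)%R.
  by rewrite /h subr_ge0 ramp_le1 lerBlDr lerDl ramp_ge0.
have hc : continuous h.
  move=> z; apply: (@cvgB _ R^o); first exact: cvg_cst.
  by apply: continuous_comp; [exact: continuous_contract|exact: continuous_ramp].
have hnu : (1 - e)%:E < \int[nu]_z (h z)%:E.
  apply: (lt_le_trans nu_M); apply: measure_le_integral => // z.
    by case/andP: (h01 z).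
  by move=> /= z_M; rewrite /h ramp_eq0 ?subr0// le_contract.
apply: filterS (cvg_dist_outer_le hc h01 hnu) => N.
apply: outer_le_sub => w /= Yw.
by rewrite /h ramp_eq1 ?subrr// le_contract.
Qed.

End convergence_in_distribution.

End laws_on_extended_reals.

Lemma weight_ratio_le {R : realType} (ep g1 g2 u c x m1 m2 C1 C2 : R) :
  0 < ep <= 1 -> 0 < C2 -> g1 < g2 ->
  c <= (g2 - g1) * ((g2 + g1) / 2 - u) -> x <= u * ln ep^-1 ->
  0 < m1 <= C1 * ep `^ (- (g1 ^+ 2 / 2)) ->
  C2^-1 * ep `^ (- (g2 ^+ 2 / 2)) <= m2 ->
  expR (g2 * x) / m2 <= C1 * C2 * ep `^ c * (expR (g1 * x) / m1).
Proof.
move=> /andP[ep0 ep1] C20 g12 hc hx /andP[m10 m1_le] m2_ge.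
rewrite /powR gt_eqF// in m1_le m2_ge *; rewrite lnV ?posrE// in hx.
set L := ln ep in m1_le m2_ge hx *.
set A1 := expR (- (g1 ^+ 2 / 2) * L) in m1_le.
set A2 := expR (- (g2 ^+ 2 / 2) * L) in m2_ge.
have L0 : L <= 0 by rewrite ln_le0.
have C10 : 0 < C1 by move: (lt_le_trans m10 m1_le); rewrite pmulr_lgt0 ?expR_gt0.
(* x <= - u L and L <= 0 give (g2 - g1) x + (g2^2 - g1^2) L / 2 <= c L. *)
have exponents : expR (g2 * x) * A1 <= expR (c * L) * expR (g1 * x) * A2.
  rewrite /A1 /A2 -!expRD ler_expR.
  have h1 : (g2 - g1) * x <= (g2 - g1) * (u * - L) by rewrite ler_pM2l ?subr_gt0.
  have h2 : 0 <= L * (c - (g2 - g1) * ((g2 + g1) / 2 - u)).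
    by rewrite mulr_le0 ?subr_le0.
  nra.
have A10 : 0 < A1 by exact: expR_gt0.
have A2_le : A2 <= C2 * m2 by rewrite mulrC -ler_pdivrMr// mulrC.
have A1V_le : A1^-1 <= C1 / m1.
  by rewrite ler_pdivlMr// mulrC ler_pdivrMr// mulrC.
have m20 : 0 < m2 by apply: lt_le_trans m2_ge; rewrite mulr_gt0 ?invr_gt0 ?expR_gt0.
rewrite ler_pdivrMr//.
apply: (@le_trans _ _ (expR (c * L) * expR (g1 * x) * (A2 / A1))).
  by rewrite mulrA ler_pdivlMr.
have -> : C1 * C2 * expR (c * L) * (expR (g1 * x) / m1) * m2 =
    expR (c * L) * expR (g1 * x) * ((C2 * m2) * (C1 / m1)) by ring.
by rewrite ler_pM2l ?mulr_gt0 ?expR_gt0// ler_pM ?invr_ge0 ?expR_ge0.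
Qed.

Section mgf_bounds.
Context {R : realType} {dT} {T : measurableType dT} {P : nat -> probability T R}
  {d : nat} {X : T -> 'rV[R]_d -> R}.

(* Condition (E) with one constant for both sides; the upper bound makes [mgf]
   finite, so nothing is lost by taking [fine]. *)
Definition mgf_within (N : nat) (gamma C ep : R) (A : set 'rV[R]_d) :=
  forall x, A x -> C^-1 * ep `^ (- (gamma ^+ 2 / 2)) <= fine (mgf P X N gamma x)
                   <= C * ep `^ (- (gamma ^+ 2 / 2)).

Lemma condE_mgf_within {Om A : set 'rV[R]_d} {eps : nat -> R} {gamma : R} :
  condE P X Om eps -> 0 < gamma -> compact A -> A `<=` Om ->
  exists2 C : R, 0 < C & forall N, mgf_within N gamma C (eps N) A.
Proof.
move=> [_ [_ hE]] g0 cA AOm.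
have [[Rg [Rg0 hup]] /(_ A cA AOm) [C [C0 hlo]]] := hE gamma g0.
exists (Num.max Rg C) => [|N x Ax]; first by rewrite lt_max Rg0.
move: (hlo N x Ax) (hup N x (AOm x Ax)).
case: (mgf _ _ _ _ _) => [m||] //=; rewrite ?lee_fin => m_lo m_up.
apply/andP; split.
  apply: le_trans m_lo; rewrite ler_wpM2r ?powR_ge0// lef_pV2 ?posrE ?lt_max ?C0 ?orbT//.
  by rewrite le_max lexx orbT.
by apply: le_trans m_up _; rewrite ler_wpM2r ?powR_ge0// le_max lexx.
Qed.

Lemma mu_N_le_scale {N w} {A : set 'rV[R]_d} {ep g1 g2 u c C1 C2 : R} :
  0 < ep <= 1 -> 0 < C1 -> 0 < C2 -> g1 < g2 ->
  c <= (g2 - g1) * ((g2 + g1) / 2 - u) ->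
  mgf_within N g1 C1 ep A -> mgf_within N g2 C2 ep A ->
  (forall x, A x -> X w x <= u * ln ep^-1) ->
  (mu_N P X N g2 A w <= (C1 * C2 * ep `^ c)%:E * mu_N P X N g1 A w)%E.
Proof.
move=> /andP[ep0 ep1] C10 C20 g12 hc hC1 hC2 hX.
have mgf_gt0 g C x :
    0 < C -> mgf_within N g C ep A -> A x -> 0 < fine (mgf P X N g x).
  move=> C0 hC Ax; have /andP[+ _] := hC x Ax; apply: lt_le_trans.
  by rewrite mulr_gt0 ?invr_gt0 ?powR_gt0.
apply: integ_le_scale => [|x Ax|x Ax|x Ax].
- by rewrite !mulr_gt0 ?powR_gt0.
- by rewrite divr_ge0 ?expR_ge0 ?ltW ?(mgf_gt0 g2 C2).
- by rewrite divr_ge0 ?expR_ge0 ?ltW ?(mgf_gt0 g1 C1).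
apply: (weight_ratio_le _ _ _ u) => //; first by rewrite ep0.
- exact: hX.
- by rewrite (mgf_gt0 g1 C1)//; case/andP: (hC1 x Ax).
- by case/andP: (hC2 x Ax).
Qed.

Lemma event_subset_low_or_high {N} {A : set 'rV[R]_d}
    {ep g1 g2 u c C1 C2 eta M : R} :
  0 < ep <= 1 -> 0 < C1 -> 0 < C2 -> g1 < g2 ->
  c <= (g2 - g1) * ((g2 + g1) / 2 - u) ->
  mgf_within N g1 C1 ep A -> mgf_within N g2 C2 ep A ->
  C1 * C2 * ep `^ c * M <= eta ->
  [set w | forall x, A x -> X w x <= u * ln ep^-1] `<=`
    [set w | mu_N P X N g2 A w <= eta%:E]%E `|` [set w | M%:E <= mu_N P X N g1 A w]%E.
Proof.
move=> ep01 C10 C20 g12 hc hC1 hC2 KM w /= hX.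
have le_scale := mu_N_le_scale ep01 C10 C20 g12 hc hC1 hC2 hX.
have [|mu1_lt] := leP M%:E (mu_N P X N g1 A w); [by right|left].
apply: (le_trans le_scale); apply: (@le_trans _ _ ((C1 * C2 * ep `^ c)%:E * M%:E)%E).
  by apply: lee_wpmul2l; rewrite ?lee_fin ?mulr_ge0 ?powR_ge0 ?ltW.
by rewrite -EFinM lee_fin.
Qed.

End mgf_bounds.

Lemma exponent_gap {R : realType} {gs delta : R} : 0 < gs -> 0 < delta ->
  exists g1 g2 c : R, [/\ 0 < g1, g1 < g2, g2 < gs, 0 < c &
    c <= (g2 - g1) * ((g2 + g1) / 2 - (gs - delta))].
Proof.
move=> gs0 delta0; set dl := Num.min delta gs.
have dl0 : 0 < dl by rewrite lt_min delta0 gs0.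
have [dl_delta dl_gs] : dl <= delta /\ dl <= gs by rewrite !ge_min !lexx orbT.
exists (gs - 2 * dl / 3), (gs - dl / 3), (dl * dl / 6); split; try lra.
  by rewrite divr_gt0 ?mulr_gt0.
have -> : (gs - dl / 3 - (gs - 2 * dl / 3)) *
    ((gs - dl / 3 + (gs - 2 * dl / 3)) / 2 - (gs - delta)) = dl / 3 * (delta - dl / 2).
  by field.
nra.
Qed.

Lemma eventually_powR_small {R : realType} {eps : nat -> R} {c th : R} :
  (forall N, 0 < eps N) -> eps @ \oo --> 0 -> 0 < c -> 0 < th ->
  \forall N \near \oo, eps N <= 1 /\ eps N `^ c <= th.
Proof.
move=> eps0 eps_cvg c0 th0; set r := Num.min 1 (th `^ c^-1).
have r0 : 0 < r by rewrite lt_min ltr01 powR_gt0.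
apply: filterS (cvgr_lt 0 eps_cvg r r0) => N eps_r; split.
  by rewrite (le_trans (ltW eps_r))// ge_min lexx.
apply: (@le_trans _ _ ((th `^ c^-1) `^ c)).
  apply: ge0_ler_powR; rewrite ?nnegrE ?powR_ge0 ?(ltW c0) ?(ltW (eps0 N))//.
  by rewrite (le_trans (ltW eps_r))// ge_min lexx orbT.
by rewrite -powRrM mulVf ?gt_eqF// powRr1// ltW.
Qed.

Theorem theorem3p5 (R : realType) (dT : measure_display) (T : measurableType dT)
  (P : nat -> probability T R) (d : nat) (X : T -> 'rV[R]_d -> R)
  (Om : set 'rV[R]_d) (eps : nat -> R) :
  setting P X Om -> condE P X Om eps -> condM P X Om ->
  forall A : set 'rV[R]_d, compact A -> A `<=` Om -> (0 < vol A)%E ->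
  forall delta : R, 0 < delta ->
  (* P_N[max_A X <= (gamma_* - delta) log eps_N^{-1}] -> 0, as an outer
     probability (no measurability of the event is presupposed) *)
  forall e : R, 0 < e ->
    \forall N \near \oo, exists B : set T, measurable B /\
      [set w | forall x, A x -> X w x <= (gamma_star R d - delta) * ln (eps N)^-1]
        `<=` B /\ (P N B <= e%:E)%E.
Proof.
move=> [d0 _] hE hM A cA AOm volA delta delta0 e e0.
have gs0 : 0 < gamma_star R d by rewrite sqrtr_gt0 mulr_gt0 ?ltr0n.
have [g1 [g2 [c [g10 g12 g2_lt c0 hc]]]] := exponent_gap gs0 delta0.
have g20 := lt_trans g10 g12.
have [C1 C10 hC1] := condE_mgf_within hE g10 cA AOm.
have [C2 C20 hC2] := condE_mgf_within hE g20 cA AOm.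
have g1_range : 0 < g1 < gamma_star R d by rewrite g10 (lt_trans g12 g2_lt).
have g2_range : 0 < g2 < gamma_star R d by rewrite g20 g2_lt.
have [nu1 [nu1_pos cv1]] := hM g1 g1_range A (compact_borel cA) AOm volA.
have [nu2 [nu2_pos cv2]] := hM g2 g2_range A (compact_borel cA) AOm volA.
have e2 : 0 < e / 2 by rewrite divr_gt0.
have [M M0 high] := cvg_dist_outer_le_large cv1 nu1_pos e2.
have [eta eta0 low] := cvg_dist_outer_le_small cv2 nu2_pos e2.
have th0 : 0 < eta / (C1 * C2 * M) by rewrite !divr_gt0 ?mulr_gt0.
have [eps0 [eps_cvg _]] := hE.
apply: filterS3 (eventually_powR_small eps0 eps_cvg c0 th0) low high.
move=> N [eps1 eps_c] lowN highN; rewrite [e]splitr.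
apply: outer_le_sub (outer_leU lowN highN).
apply: (event_subset_low_or_high _ C10 C20 g12 hc (hC1 N) (hC2 N)).
  by rewrite eps0.
by rewrite mulrAC mulrC -ler_pdivlMr ?mulr_gt0.
Qed.
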